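(* Let $\mathcal C$ be a category and $n\ge0$. Suppose $f:A\to T$, $g:B\to T$ and $\varphi:A\to B$ are maps in $Z^n(\mathcal C)$ with $g\circ\varphi=f$. If $f$ and $g$ are degeneracy maps, then so is $\varphi$.
   Context: Notation: for $n\ge 0$, $[n]$ denotes $\{0,\dots,n-1\}$; $\Delta_+$ is the category of these finite total orders and order-preserving maps. For monotone $\psi:[n]\to[m]$ define $\hat\psi:[m+1]\to[n+1]$ by $\hat\psi(i)=\min(\{j\in[n]:\psi(j)\ge i\}\cup\{n\})$. Zigzags: in a category $\mathcal C$, a zigzag $X$ of length $n$ is a diagram $X(r_0)\xrightarrow{x_0} X(s_0)\xleftarrow{x'_0} X(r_1)\to\cdots\xrightarrow{x_{n-1}} X(s_{n-1})\xleftarrow{x'_{n-1}} X(r_n)$. A zigzag map $f:X\to Y$ (lengths $n$, $m$) consists of a monotone $f_s:[n]\to[m]$, regular slices $f(r_i):X(r_{\hat{f_s}(i)})\to Y(r_i)$ for $0\le i\le m$ and singular slices $f(s_j):X(s_j)\to Y(s_{f_s(j)})$ for $0\le j<n$, such that for each $0\le i<m$: if $f_s^{-1}(i)\neq\emptyset$ with least element $p$, greatest $q$, then $f(s_p)\circ x_p=y_i\circ f(r_i)$, $f(s_q)\circ x'_q=y'_i\circ f(r_{i+1})$, $f(s_j)\circ x'_j=f(s_{j+1})\circ x_{j+1}$ for $p\le j<q$; if $f_s^{-1}(i)=\emptyset$ then $y_i\circ f(r_i)=y'_i\circ f(r_{i+1})$. Composition: $(g\circ f)_s=g_s\circ f_s$,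 $(g\circ f)(s_j)=g(s_{f_s(j)})\circ f(s_j)$, $(g\circ f)(r_i)=g(r_i)\circ f(r_{\hat{g_s}(i)})$. This gives a category $Z(\mathcal C)$; $Z^0(\mathcal C)=\mathcal C$, $Z^n(\mathcal C)=Z(Z^{n-1}(\mathcal C))$. $\pi:Z(\mathcal C)\to\Delta_+$ sends a zigzag of length $n$ to $[n]$ and $f$ to $f_s$; $f$ is $\pi$-vertical if $\pi(f)$ is an identity; $f:x\to y$ is $\pi$-cocartesian if for every $h:x\to y'$ and $u:\pi(y)\to\pi(y')$ with $u\circ\pi(f)=\pi(h)$ there is a unique $v:y\to y'$ with $v\circ f=h$, $\pi(v)=u$. Degeneracy maps in $Z^n(\mathcal C)$ (by induction on $n$): in $Z^0(\mathcal C)$ the isomorphisms; for $n\ge1$ the maps generated under composition by simple degeneracy maps (the $\pi$-cocartesian maps $f$ with $\pi(f)$ a monomorphism of $\Delta_+$) and parallel degeneracy maps (the $\pi$-vertical maps whose regular and singular slices are all degeneracy maps in $Z^{n-1}(\mathcal C)$). *)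

From mathcomp Require Import all_boot.
Set Implicit Arguments. Unset Strict Implicit. Unset Printing Implicit Defensive.

Record category := Category {
  cob : Type;
  chom : cob -> cob -> Type;
  cid : forall a, chom a a;
  ccomp : forall a b d, chom b d -> chom a b -> chom a d;
  ccompA : forall a b e d (h : chom e d) (g : chom b e) (f : chom a b),
      ccomp h (ccomp g f) = ccomp (ccomp h g) f;
  ccomp1f : forall a b (f : chom a b), ccomp (cid b) f = f;
  ccompf1 : forall a b (f : chom a b), ccomp f (cid a) = f
}.
Arguments cid {c a}.
Arguments ccomp {c a b d}.

(* Category "data" used to build Z(C): morphisms are given by raw data
   [hom] together with a predicate [valid] singling out the genuine
   morphisms (those satisfying the zigzag-map equations). *)
Record PCat := PCatMk {
  ob : Type;
  hom : ob -> ob -> Type;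
  valid : forall a b, hom a b -> Prop;
  idm : forall a, hom a a;
  cmp : forall a b c, hom b c -> hom a b -> hom a c
}.
Arguments hom {p}.
Arguments valid {p a b}.
Arguments idm {p a}.
Arguments cmp {p a b c}.

Definition pcat_of (C : category) : PCat :=
  @PCatMk (cob C) (@chom C) (fun _ _ _ => True) (@cid C) (@ccomp C).

(* Packed arrows, used to compare morphisms between possibly different
   (but provably equal) objects: equality of packed arrows means equal
   source, equal target and equal morphism. *)
Definition arr (P : PCat) := {a : ob P & {b : ob P & hom a b}}.
Definition pk (P : PCat) (a b : ob P) (f : hom a b) : arr P :=
  existT _ a (existT _ b f).

(* The simplex category Delta_+ : objects [n] = 'I_n, monotone maps.    *)
Definition monotone (n m : nat) (psi : 'I_n -> 'I_m) : Prop :=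
  forall j j' : 'I_n, j <= j' -> psi j <= psi j'.

Definition delta_mono (n m : nat) (psi : 'I_n -> 'I_m) : Prop :=
  forall k (a b : 'I_k -> 'I_n), monotone a -> monotone b ->
    (forall x, psi (a x) = psi (b x)) -> forall x, a x = b x.

(* hat psi (i) = min ({ j in [n] | psi j >= i } U {n}) *)
Definition hat (n m : nat) (psi : 'I_n -> 'I_m) (i : 'I_m.+1) : 'I_n.+1 :=
  inord (find (fun j : 'I_n => i <= psi j) (enum 'I_n)).

(* Zigzags in P.  Index conventions: regular objects X(r_0..r_n) are
   indexed by 'I_n.+1, singular objects X(s_0..s_{n-1}) by 'I_n;
   x_i : X(r_i) -> X(s_i) and x'_i : X(r_{i+1}) -> X(s_i). *)
Section Zigzag.
Variable P : PCat.

Definition rlo n (i : 'I_n) : 'I_n.+1 := widen_ord (leqnSn n) i.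
Definition rhi n (i : 'I_n) : 'I_n.+1 := lift ord0 i.

Record zz := ZZ {
  zlen : nat;
  zreg : 'I_zlen.+1 -> ob P;
  zsing : 'I_zlen -> ob P;
  zfwd : forall i : 'I_zlen, hom (zreg (rlo i)) (zsing i);
  zbwd : forall i : 'I_zlen, hom (zreg (rhi i)) (zsing i);
  zfwd_valid : forall i, valid (zfwd i);
  zbwd_valid : forall i, valid (zbwd i)
}.
Arguments zreg : clear implicits.
Arguments zsing : clear implicits.
Arguments zfwd : clear implicits.
Arguments zbwd : clear implicits.

(* Raw data of a zigzag map f : X -> Y; [zr] records the index map
   hat(f_s) (forced to equal it by validity). *)
Record zmap (X Y : zz) := ZMap {
  zs : 'I_(zlen X) -> 'I_(zlen Y);
  zr : 'I_(zlen Y).+1 -> 'I_(zlen X).+1;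
  zrs : forall i : 'I_(zlen Y).+1, hom (zreg X (zr i)) (zreg Y i);
  zss : forall j : 'I_(zlen X), hom (zsing X j) (zsing Y (zs j))
}.

Definition zmap_valid (X Y : zz) (f : zmap X Y) : Prop :=
  [/\ monotone (zs f),
      (forall i, zr f i = hat (zs f) i),
      (forall i, valid (zrs f i)),
      (forall j, valid (zss f j)) &
      forall i : 'I_(zlen Y),
        (forall p, zs f p = i -> (forall j, zs f j = i -> p <= j) ->
           pk (cmp (zss f p) (zfwd X p)) = pk (cmp (zfwd Y i) (zrs f (rlo i))))
     /\
        (forall q, zs f q = i -> (forall j, zs f j = i -> j <= q) ->
           pk (cmp (zss f q) (zbwd X q)) = pk (cmp (zbwd Y i) (zrs f (rhi i))))
     /\
        (forall p q, zs f p = i -> (forall j, zs f j = i -> p <= j) ->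
           zs f q = i -> (forall j, zs f j = i -> j <= q) ->
           forall j j' : 'I_(zlen X), nat_of_ord j' = j.+1 -> p <= j -> j' <= q ->
           pk (cmp (zss f j) (zbwd X j)) = pk (cmp (zss f j') (zfwd X j')))
     /\
        ((forall j, zs f j <> i) ->
           pk (cmp (zfwd Y i) (zrs f (rlo i))) = pk (cmp (zbwd Y i) (zrs f (rhi i))))].

Definition zid (X : zz) : zmap X X :=
  @ZMap X X (fun j => j) (fun i => i) (fun i => idm) (fun j => idm).

Definition zcomp (X Y Z : zz) (g : zmap Y Z) (f : zmap X Y) : zmap X Z :=
  @ZMap X Z (fun j => zs g (zs f j)) (fun i => zr f (zr g i))
    (fun i => cmp (zrs g i) (zrs f (zr g i)))
    (fun j => cmp (zss g (zs f j)) (zss f j)).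

End Zigzag.

Definition Zc (P : PCat) : PCat :=
  @PCatMk (zz P) (@zmap P) (@zmap_valid P) (@zid P) (@zcomp P).

Fixpoint Zn (n : nat) (P : PCat) : PCat :=
  match n with 0 => P | k.+1 => Zc (Zn k P) end.

Definition pi_vertical (P : PCat) (X Y : zz P) (f : zmap X Y) : Prop :=
  zlen X = zlen Y /\ forall j, nat_of_ord (zs f j) = j.

Definition pi_cocartesian (P : PCat) (X Y : zz P) (f : zmap X Y) : Prop :=
  forall (Y' : zz P) (h : zmap X Y') (u : 'I_(zlen Y) -> 'I_(zlen Y')),
    zmap_valid h -> monotone u -> (forall j, u (zs f j) = zs h j) ->
    exists v : zmap Y Y',
      (zmap_valid v /\ zcomp v f = h /\ forall j, zs v j = u j) /\
      forall v' : zmap Y Y',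
        (zmap_valid v' /\ zcomp v' f = h /\ forall j, zs v' j = u j) -> v' = v.

Inductive comp_closure (P : PCat) (S : forall a b : ob P, hom a b -> Prop)
  : forall a b : ob P, hom a b -> Prop :=
| cc_base a b (f : hom a b) : S a b f -> comp_closure S f
| cc_comp a b c (f : hom a b) (g : hom b c) :
    comp_closure S f -> comp_closure S g -> comp_closure S (cmp g f).

Definition is_iso (P : PCat) (a b : ob P) (f : hom a b) : Prop :=
  valid f /\ exists g : hom b a, valid g /\ cmp g f = idm /\ cmp f g = idm.

Fixpoint degen (P : PCat) (n : nat) : forall a b : ob (Zn n P), hom a b -> Prop :=
  match n return forall a b : ob (Zn n P), hom a b -> Prop with
  | 0 => @is_iso P
  | k.+1 => @comp_closure (Zc (Zn k P))
      (fun (X Y : zz (Zn k P)) (f : zmap X Y) =>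
         (zmap_valid f /\ pi_cocartesian f /\ delta_mono (zs f))
      \/
         (zmap_valid f /\ pi_vertical f /\
          (forall i, degen (zrs f i)) /\ (forall j, degen (zss f j))))
  end.

(* Write Z for Z(Z^n C).  By induction on n, we prove the theorem together with the
   facts that isomorphisms are degeneracy maps and that degeneracy maps are valid and
   closed under composition.  The induction step rests on a characterization: a valid
   map f : X -> Y of Z is a degeneracy map iff its singular index map is injective,
   its regular and singular slices are degeneracy maps of Z^n C, and for each singular
   index l of Y missed by f the composite y_l o f(r_l) is one as well.  Such an f
   factors as the simple degeneracy map from X into the zigzag obtained by inserting
   identity spans at the missed indices, followed by a vertical map whose slices are
   those of f; conversely, the condition holds for simple maps (whose vertical factor
   is an isomorphism) and for parallel ones, and it is stable under composition.  For
   g o phi = f it passes from f and g to phi slice by slice, by the induction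
   hypothesis.  Validity of maps of Z is handled through the arrow X(r_k) -> Y(s_l)
   that a valid map determines whenever the regular index k lies in the span of l. *)

From mathcomp Require Import all_boot zify.
From Stdlib Require Import ClassicalEpsilon FunctionalExtensionality Eqdep Classical.
Set Implicit Arguments. Unset Strict Implicit. Unset Printing Implicit Defensive.

Section PackedArrows.
Variable P : PCat.

Lemma pk_inj (a b : ob P) (f g : hom a b) : pk f = pk g -> f = g.
Proof. by move=> e; apply: inj_pair2; apply: (inj_pair2 _ _ _ _ _ e). Qed.

Lemma pk_src (a b a' b' : ob P) (f : hom a b) (g : hom a' b') : pk f = pk g -> a = a'.
Proof. by move=> e; exact: (congr1 (@projT1 _ _) e). Qed.

Lemma pk_tgt (a b a' b' : ob P) (f : hom a b) (g : hom a' b') : pk f = pk g -> b = b'.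
Proof. by move=> e; exact: (congr1 (fun x => projT1 (projT2 x)) e). Qed.

Lemma pk_transport (Q : forall a b : ob P, hom a b -> Prop)
    (a b a' b' : ob P) (f : hom a b) (g : hom a' b') :
  pk f = pk g -> Q a b f -> Q a' b' g.
Proof.
move=> e; move: (pk_src e) (pk_tgt e) => ea eb; subst a' b'.
by rewrite (pk_inj e).
Qed.

Definition cast_hom (a b a' b' : ob P) (ea : a = a') (eb : b = b') (f : hom a b) :
  hom a' b' :=
  eq_rect _ (fun y => hom a' y) (eq_rect _ (fun x => hom x b) f _ ea) _ eb.

Lemma pk_cast (a b a' b' : ob P) (ea : a = a') (eb : b = b') (f : hom a b) :
  pk (cast_hom ea eb f) = pk f.
Proof. by subst. Qed.

Lemma valid_cast (a b a' b' : ob P) (ea : a = a') (eb : b = b') (f : hom a b) :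
  valid f -> valid (cast_hom ea eb f).
Proof. by subst. Qed.

Lemma valid_pk_retype (a b a' b' : ob P) (g : hom a' b') :
  a' = a -> b' = b -> valid g -> exists e : hom a b, valid e /\ pk e = pk g.
Proof.
by move=> ea eb vg; exists (cast_hom ea eb g); split; [apply: valid_cast | apply: pk_cast].
Qed.

(* Composition of packed arrows; when they are not composable the junk value
   is the left argument. *)
Definition pcm (g f : arr P) : arr P :=
  match excluded_middle_informative (projT1 (projT2 f) = projT1 g) with
  | left e => pk (cmp (projT2 (projT2 g))
                   (eq_rect _ (fun x => hom (projT1 f) x) (projT2 (projT2 f)) _ e))
  | right _ => g
  end.

Lemma pcm_pk (a b c : ob P) (g : hom b c) (f : hom a b) : pcm (pk g) (pk f) = pk (cmp g f).
Proof. by rewrite /pcm /=; case: excluded_middle_informative => // e; rewrite -eq_rect_eq. Qed.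

End PackedArrows.

Record pcat_laws (P : PCat) : Prop := PCatLaws {
  cmpA : forall (a b c d : ob P) (h : hom c d) (g : hom b c) (f : hom a b),
    cmp h (cmp g f) = cmp (cmp h g) f;
  cmp1f : forall (a b : ob P) (f : hom a b), cmp idm f = f;
  cmpf1 : forall (a b : ob P) (f : hom a b), cmp f idm = f;
  valid_cmp : forall (a b c : ob P) (g : hom b c) (f : hom a b),
    valid f -> valid g -> valid (cmp g f);
  valid_idm : forall a : ob P, valid (@idm P a) }.

Section PcmAssoc.
Variable P : PCat.
Hypothesis P_laws : pcat_laws P.
Variables (a b c d : ob P) (x : hom c d) (y : hom b c) (z : hom a b).

Lemma pcm_pk_cmpl : pcm (pk (cmp x y)) (pk z) = pk (cmp x (cmp y z)).
Proof. by rewrite pcm_pk (cmpA P_laws). Qed.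

Lemma pcm_pk_cmpr : pcm (pk x) (pk (cmp y z)) = pk (cmp (cmp x y) z).
Proof. by rewrite pcm_pk (cmpA P_laws). Qed.

End PcmAssoc.

Lemma pk_cmpf1 (P : PCat) (P_laws : pcat_laws P) (a b c d : ob P)
    (x : hom b c) (e : hom a b) :
  pk e = pk (@idm P d) -> pk (cmp x e) = pk x.
Proof.
move=> e1; move: (pk_src e1) (pk_tgt e1) => ea eb; subst a b.
by rewrite (pk_inj e1) (cmpf1 P_laws).
Qed.

Lemma pk_cmp1f (P : PCat) (P_laws : pcat_laws P) (a b c d : ob P)
    (x : hom a b) (e : hom b c) :
  pk e = pk (@idm P d) -> pk (cmp e x) = pk x.
Proof.
move=> e1; move: (pk_src e1) (pk_tgt e1) => eb ec; subst b c.
by rewrite (pk_inj e1) (cmp1f P_laws).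
Qed.

Lemma rloE n (i : 'I_n) : rlo i = i :> nat. Proof. by []. Qed.
Lemma rhiE n (i : 'I_n) : rhi i = i.+1 :> nat. Proof. by []. Qed.

Lemma ord_ltn_ext n (x y : 'I_n.+1) : (forall j : 'I_n, (j < x) = (j < y)) -> x = y.
Proof.
move=> ltE; case: (ltngtP x y) => [lt|lt|/val_inj //].
- have x_lt : x < n by move: (leq_ord y); lia.
  by have := ltE (Ordinal x_lt); rewrite /= ltnn lt.
- have y_lt : y < n by move: (leq_ord x); lia.
  by have := ltE (Ordinal y_lt); rewrite /= ltnn lt.
Qed.

Lemma nat_crossing (F : nat -> nat) k a b : a < b -> F a < k -> k <= F b ->
  exists2 c, a <= c < b & F c < k <= F c.+1.
Proof.
elim: b => // b IH; rewrite ltnS leq_eqVlt => /orP[/eqP <-|lt_ab] Fa_k k_Fb.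
  by exists a; lia.
have [Fb_k|k_Fb'] := ltnP (F b) k; first by exists b; lia.
by have [c ? ?] := IH lt_ab Fa_k k_Fb'; exists c; lia.
Qed.

Section Hat.
Variables n m : nat.
Variable psi : 'I_n -> 'I_m.

Lemma hatE i : hat psi i = find (fun j : 'I_n => i <= psi j) (enum 'I_n) :> nat.
Proof. by rewrite /hat inordK // ltnS -[n in _ <= n](size_enum_ord n) find_size. Qed.

Hypothesis psi_mono : monotone psi.

Lemma ltn_hat i (j : 'I_n) : (j < hat psi i) = (psi j < i).
Proof.
rewrite hatE; set a := fun j : 'I_n => i <= psi j.
case: (ltnP j (find a (enum 'I_n))) => j_lt.
  by have := before_find j j_lt; rewrite nth_ord_enum /a ltnNge => /negbT.
have a_lt : find a (enum 'I_n) < n by apply: leq_ltn_trans j_lt (ltn_ord j).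
have a_has : has a (enum 'I_n) by rewrite has_find size_enum_ord.
have := nth_find j a_has.
rewrite -[find a _]/(nat_of_ord (Ordinal a_lt)) nth_ord_enum /a => le_i.
by apply/esym/negbTE; rewrite -leqNgt (leq_trans le_i) // psi_mono.
Qed.

Lemma hat_mono (i i' : 'I_m.+1) : i <= i' -> hat psi i <= hat psi i'.
Proof.
move=> le_ii'; rewrite leqNgt; apply/negP => lt.
have lt_n : hat psi i' < n by apply: leq_trans lt (leq_ord _).
move: (ltn_hat i (Ordinal lt_n)) (ltn_hat i' (Ordinal lt_n)); rewrite /= lt ltnn.
move=> /esym lt_i /esym/negbT; rewrite -leqNgt => le_i'.
by have := leq_trans lt_i (leq_trans le_ii' le_i'); rewrite ltnn.
Qed.

Lemma fibreP (j : 'I_n) (l : 'I_m) :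
  (psi j == l) = (hat psi (rlo l) <= j < hat psi (rhi l)).
Proof. by rewrite leqNgt !ltn_hat rhiE ltnS -leqNgt -val_eqE eqn_leq andbC. Qed.

Lemma hat_gap (l : 'I_m) : (forall j, psi j <> l) -> hat psi (rlo l) = hat psi (rhi l).
Proof.
move=> gap; apply: ord_ltn_ext => j; rewrite !ltn_hat rhiE ltnS [in RHS]leq_eqVlt.
by case: eqP => //= /val_inj /gap.
Qed.

Lemma hat_ord_max : hat psi ord_max = n :> nat.
Proof.
apply/eqP; rewrite eqn_leq leq_ord leqNgt; apply/negP => lt.
by have := ltn_hat ord_max (Ordinal lt); rewrite /= ltnn ltn_ord.
Qed.

Hypothesis psi_inj : injective psi.

Lemma inj_monotone_lt (j j' : 'I_n) : j < j' -> psi j < psi j'.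
Proof.
move=> lt; rewrite ltn_neqAle (psi_mono (ltnW lt)) andbT.
by apply: contraTneq lt => /val_inj /psi_inj ->; rewrite ltnn.
Qed.

Lemma inj_monotone_ge (j : 'I_n) : j <= psi j.
Proof.
case: j => k; elim: k => [//|k IH] lt_k; have lt_k' : k < n by lia.
have := @inj_monotone_lt (Ordinal lt_k') (Ordinal lt_k) (ltnSn k).
by have := IH lt_k'; rewrite /=; lia.
Qed.

Lemma hat_rlo_inj (j : 'I_n) : hat psi (rlo (psi j)) = rlo j.
Proof.
apply: ord_ltn_ext => j'; rewrite ltn_hat /=.
case: (ltngtP j' j) => [lt|lt|/val_inj ->]; last by rewrite ltnn.
- exact: inj_monotone_lt.
- by apply/negbTE; rewrite -leqNgt (psi_mono (ltnW lt)).
Qed.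

Lemma hat_rhi_inj (j : 'I_n) : hat psi (rhi (psi j)) = rhi j.
Proof.
apply: ord_ltn_ext => j'; rewrite ltn_hat !rhiE !ltnS.
case: (leqP j' j) => [le|lt]; first by rewrite psi_mono.
by apply/negbTE; rewrite -ltnNge inj_monotone_lt.
Qed.

Lemma hat_surj (c : 'I_n.+1) : exists i : 'I_m.+1, hat psi i = c.
Proof.
case: (ltnP c n) => [lt|le].
  by exists (rlo (psi (Ordinal lt))); rewrite hat_rlo_inj; apply: val_inj.
exists ord_max; apply: val_inj; rewrite /= hat_ord_max.
by apply/eqP; rewrite eqn_leq le -ltnS ltn_ord.
Qed.

End Hat.

Lemma eq_hat n m (psi psi' : 'I_n -> 'I_m) : psi =1 psi' -> hat psi =1 hat psi'.
Proof. by move=> e i; rewrite /hat; congr inord; apply: eq_find => j; rewrite /= e. Qed.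

Lemma hat_id n (i : 'I_n.+1) : hat (fun j : 'I_n => j) i = i.
Proof. by apply: ord_ltn_ext => j; rewrite ltn_hat. Qed.

Lemma hat_comp n m k (psi : 'I_n -> 'I_m) (u : 'I_m -> 'I_k) :
  monotone psi -> monotone u -> forall i, hat psi (hat u i) = hat (u \o psi) i.
Proof.
move=> psi_mono u_mono i; have uo_mono : monotone (u \o psi) by move=> j j' /psi_mono /u_mono.
by apply: ord_ltn_ext => j; rewrite /= !ltn_hat.
Qed.

Lemma monotone_id n : monotone (fun j : 'I_n => j).
Proof. by []. Qed.

Lemma delta_mono_inj n m (psi : 'I_n -> 'I_m) : delta_mono psi -> injective psi.
Proof.
move=> psi_mono x y e; have const_mono (z : 'I_n) : monotone (fun _ : 'I_1 => z) by [].
exact: (psi_mono 1 _ _ (const_mono x) (const_mono y) (fun=> e) ord0).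
Qed.

(** * Validity of zigzag maps *)

Lemma zmap_ext (P : PCat) (X Y : zz P) (f g : zmap X Y) :
  zs f =1 zs g -> zr f =1 zr g ->
  (forall i, pk (zrs f i) = pk (zrs g i)) -> (forall j, pk (zss f j) = pk (zss g j)) ->
  f = g.
Proof.
case: f g => sf rf rsf ssf [sg rg rsg ssg] /= es er ers ess.
move: (functional_extensionality _ _ es) (functional_extensionality _ _ er) => ??.
subst sg rg; congr ZMap; apply: functional_extensionality_dep => ?; exact: pk_inj.
Qed.

Section ZmapValid.
Variable P : PCat.
Variables X Y : zz P.
Variable f : zmap X Y.

Definition zmap_prevalid := [/\ monotone (zs f), zr f =1 hat (zs f),
  (forall i, valid (zrs f i)) & (forall j, valid (zss f j))].

Definition in_span (k : 'I_(zlen X).+1) (l : 'I_(zlen Y)) :=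
  zr f (rlo l) <= k <= zr f (rhi l).

(* The four ways of reading off an arrow X(r_k) -> Y(s_l) from the data of [f]:
   [zmap_valid f] says exactly that they agree whenever they are defined. *)
Definition rsarrow_spec (k : 'I_(zlen X).+1) (l : 'I_(zlen Y)) (a : arr P) : Prop :=
  [/\ k = zr f (rlo l) -> pk (cmp (zfwd l) (zrs f (rlo l))) = a,
      k = zr f (rhi l) -> pk (cmp (zbwd l) (zrs f (rhi l))) = a,
      (forall j, zs f j = l -> k = j :> nat -> pk (cmp (zss f j) (zfwd j)) = a) &
      (forall j, zs f j = l -> k = j.+1 :> nat -> pk (cmp (zss f j) (zbwd j)) = a)].

Hypothesis f_pre : zmap_prevalid.

Lemma zs_fibreP j l : reflect (zs f j = l) (zr f (rlo l) <= j < zr f (rhi l)).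
Proof. by case: f_pre => f_mono zrE _ _; rewrite !zrE -fibreP //; apply: eqP. Qed.

Lemma zr_mono (i i' : 'I_(zlen Y).+1) : i <= i' -> zr f i <= zr f i'.
Proof. by case: f_pre => f_mono zrE _ _; rewrite !zrE; apply: hat_mono. Qed.

Lemma zr_rlo_rhi l : zr f (rlo l) <= zr f (rhi l).
Proof. by apply: zr_mono; rewrite rhiE. Qed.

Lemma in_span_rlo l : in_span (zr f (rlo l)) l.
Proof. by rewrite /in_span leqnn zr_rlo_rhi. Qed.

Lemma in_span_rhi l : in_span (zr f (rhi l)) l.
Proof. by rewrite /in_span leqnn zr_rlo_rhi. Qed.

Lemma in_span_zs_rlo j : in_span (rlo j) (zs f j).
Proof. by have /zs_fibreP := erefl (zs f j); rewrite /in_span /=; lia. Qed.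

Lemma in_span_zs_rhi j : in_span (rhi j) (zs f j).
Proof. by have /zs_fibreP := erefl (zs f j); rewrite /in_span rhiE; lia. Qed.

Lemma rsarrow_spec_unique k l a b :
  in_span k l -> rsarrow_spec k l a -> rsarrow_spec k l b -> a = b.
Proof.
case/andP=> lo_k k_hi [alo ahi afwd _] [blo bhi bfwd _].
have [k_lo|k_lo] := eqVneq k (zr f (rlo l)); first by rewrite -alo // blo.
have [k_hi'|k_hi'] := eqVneq k (zr f (rhi l)); first by rewrite -ahi // bhi.
move: k_lo k_hi'; rewrite -!val_eqE /= => k_lo k_hi'.
have lt_len : k < zlen X by move: (leq_ord (zr f (rhi l))); lia.
have j_l : zs f (Ordinal lt_len) = l by apply/zs_fibreP => /=; lia.
by rewrite -(afwd _ j_l) // bfwd.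
Qed.

Lemma zr_rlo_least l (p : 'I_(zlen X)) :
  zs f p = l -> (forall j, zs f j = l -> p <= j) -> zr f (rlo l) = p :> nat.
Proof.
move=> /zs_fibreP/andP[lo_p p_hi] p_least.
have lt_len : zr f (rlo l) < zlen X by move: (ltn_ord p); lia.
have /p_least : zs f (Ordinal lt_len) = l by apply/zs_fibreP => /=; lia.
by rewrite /=; lia.
Qed.

Lemma zr_rhi_greatest l (q : 'I_(zlen X)) :
  zs f q = l -> (forall j, zs f j = l -> j <= q) -> zr f (rhi l) = q.+1 :> nat.
Proof.
move=> /zs_fibreP/andP[lo_q q_hi] q_greatest.
case: (ltnP q.+1 (zr f (rhi l))) => [lt_q|]; last by lia.
have lt_len : q.+1 < zlen X by move: (leq_ord (zr f (rhi l))); lia.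
have /q_greatest : zs f (Ordinal lt_len) = l by apply/zs_fibreP => /=; lia.
by rewrite /=; lia.
Qed.

Lemma zr_gap l : (forall j, zs f j <> l) -> zr f (rlo l) = zr f (rhi l).
Proof.
move=> gap; apply: val_inj => /=.
case: (ltnP (zr f (rlo l)) (zr f (rhi l))) => [lt|]; last by move: (zr_rlo_rhi l); lia.
have lt_len : zr f (rlo l) < zlen X by move: (leq_ord (zr f (rhi l))); lia.
by case: (gap (Ordinal lt_len)); apply/zs_fibreP => /=; lia.
Qed.

Lemma valid_of_rsarrow_spec :
  (forall l k, in_span k l -> exists a, rsarrow_spec k l a) -> zmap_valid f.
Proof.
move=> spec; case: (f_pre) => f_mono zrE vrs vss; split=> // l.
split; [|split; [|split]].
- move=> p p_l p_least; have [a [alo _ afwd _]] := spec l _ (in_span_rlo l).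
  by rewrite alo // (afwd _ p_l (zr_rlo_least p_l p_least)).
- move=> q q_l q_greatest; have [a [_ ahi _ abwd]] := spec l _ (in_span_rhi l).
  by rewrite ahi // (abwd _ q_l (zr_rhi_greatest q_l q_greatest)).
- move=> p q p_l p_least q_l q_greatest j j' j'E p_j j'_q.
  move: (zr_rlo_least p_l p_least) (zr_rhi_greatest q_l q_greatest) => lo hi.
  have j_l : zs f j = l by apply/zs_fibreP; rewrite lo hi; lia.
  have j'_l : zs f j' = l by apply/zs_fibreP; rewrite lo hi; lia.
  have span : in_span (rhi j) l by rewrite /in_span lo hi rhiE; lia.
  have [a [_ _ afwd abwd]] := spec l _ span.
  by rewrite abwd // afwd // rhiE.
- move=> gap; have [a [alo ahi _ _]] := spec l _ (in_span_rlo l).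
  by rewrite alo // ahi // (zr_gap gap).
Qed.

End ZmapValid.

Lemma prevalid_of_valid (P : PCat) (X Y : zz P) (f : zmap X Y) :
  zmap_valid f -> zmap_prevalid f.
Proof. by case. Qed.

Lemma valid_monotone (P : PCat) (X Y : zz P) (f : zmap X Y) : zmap_valid f -> monotone (zs f).
Proof. by case. Qed.

Section Rsarrow.
Variable P : PCat.
Variables X Y : zz P.
Variable f : zmap X Y.
Hypothesis f_valid : zmap_valid f.
Let f_pre := prevalid_of_valid f_valid.

Lemma zmap_valid_least l (j : 'I_(zlen X)) : zs f j = l -> j = zr f (rlo l) :> nat ->
  pk (cmp (zss f j) (zfwd j)) = pk (cmp (zfwd l) (zrs f (rlo l))).
Proof.
move=> j_l jE; case: f_valid => _ _ _ _ /(_ l) [least _].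
apply: least => // j' /(zs_fibreP f_pre).
by rewrite jE => /andP[].
Qed.

Lemma zmap_valid_greatest l (j : 'I_(zlen X)) : zs f j = l -> j.+1 = zr f (rhi l) :> nat ->
  pk (cmp (zss f j) (zbwd j)) = pk (cmp (zbwd l) (zrs f (rhi l))).
Proof.
move=> j_l jE; case: f_valid => _ _ _ _ /(_ l) [_ [greatest _]].
apply: greatest => // j' /(zs_fibreP f_pre).
by rewrite -jE ltnS => /andP[].
Qed.

Lemma zmap_valid_chain l (j j' : 'I_(zlen X)) : zs f j = l -> zs f j' = l -> j' = j.+1 :> nat ->
  pk (cmp (zss f j) (zbwd j)) = pk (cmp (zss f j') (zfwd j')).
Proof.
move=> /(zs_fibreP f_pre) j_l /(zs_fibreP f_pre) j'_l j'E.
have lt_lo : zr f (rlo l) < zlen X by move: (ltn_ord j); lia.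
have lt_hi : (zr f (rhi l)).-1 < zlen X by move: (leq_ord (zr f (rhi l))); lia.
case: f_valid => _ _ _ _ /(_ l) [_ [_ [chain _]]].
apply: (chain (Ordinal lt_lo) (Ordinal lt_hi)) => //=; try lia;
  by [apply/(zs_fibreP f_pre) => /=; lia | move=> i /(zs_fibreP f_pre); lia].
Qed.

Lemma zmap_valid_gap l : zr f (rlo l) = zr f (rhi l) ->
  pk (cmp (zfwd l) (zrs f (rlo l))) = pk (cmp (zbwd l) (zrs f (rhi l))).
Proof.
move=> gap; case: f_valid => _ _ _ _ /(_ l) [_ [_ [_ ->]]] // j /(zs_fibreP f_pre).
by rewrite gap; lia.
Qed.

Definition rsarrow (k : 'I_(zlen X).+1) (l : 'I_(zlen Y)) : arr P :=
  if k == zr f (rlo l) then pk (cmp (zfwd l) (zrs f (rlo l)))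
  else if k == zr f (rhi l) then pk (cmp (zbwd l) (zrs f (rhi l)))
  else if insub (k : nat) is Some j then pk (cmp (zss f j) (zfwd j))
  else pk (cmp (zbwd l) (zrs f (rhi l))). (* junk: [k] is outside the span *)

Lemma rsarrowP k l : in_span f k l -> rsarrow_spec f k l (rsarrow k l).
Proof.
rewrite /rsarrow => span; split.
- by move=> ->; rewrite eqxx.
- move=> ->; case: eqP => [gap|_]; last by rewrite eqxx.
  by rewrite (zmap_valid_gap (esym gap)).
- move=> j j_l kE; have /(zs_fibreP f_pre) j_fib := j_l.
  case: eqP => [/(congr1 (@nat_of_ord _)) k_lo|_].
    by rewrite (zmap_valid_least j_l) // -kE k_lo.
  case: eqP => [/(congr1 (@nat_of_ord _))|_]; first by lia.
  case: insubP => [j' _ /= j'E|]; last by rewrite kE ltn_ord.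
  by have -> : j' = j by apply: val_inj => /=; lia.
- move=> j j_l kE; have /(zs_fibreP f_pre) j_fib := j_l.
  case: eqP => [/(congr1 (@nat_of_ord _))|_]; first by lia.
  case: eqP => [/(congr1 (@nat_of_ord _)) k_hi|/eqP k_hi].
    by rewrite (zmap_valid_greatest j_l) // -kE k_hi.
  move: k_hi span (leq_ord (zr f (rhi l))).
  rewrite -val_eqE /in_span /= => k_hi span hi_len.
  case: insubP => [j' _ /= j'E|k_len]; last by exfalso; lia.
  apply: (zmap_valid_chain j_l) => /=; last by lia.
  by apply/(zs_fibreP f_pre); lia.
Qed.

End Rsarrow.

Lemma rsarrow_typed (P : PCat) (P_laws : pcat_laws P) (X Y : zz P) (h : zmap X Y)
    (h_valid : zmap_valid h) (k : 'I_(zlen X).+1) (l : 'I_(zlen Y)) :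
  in_span h k l -> exists t : hom (zreg k) (zsing l), valid t /\ pk t = rsarrow h k l.
Proof.
move=> span; have h_pre := prevalid_of_valid h_valid.
have [_ hhi hfwd _] := rsarrowP h_valid span.
case: h_valid => _ _ vrs vss _; move: (span); rewrite /in_span => /andP[lo_k k_hi].
case: (ltnP k (zr h (rhi l))) => [lt_hi|ge_hi].
  have lt_len : k < zlen X by move: (leq_ord (zr h (rhi l))); lia.
  have j_l : zs h (Ordinal lt_len) = l by apply/(zs_fibreP h_pre) => /=; lia.
  rewrite -(hfwd _ j_l) //; apply: valid_pk_retype.
  - by congr zreg; apply: val_inj.
  - by rewrite j_l.
  - exact: (valid_cmp P_laws) (zfwd_valid _) (vss _).
have k_hi' : zr h (rhi l) = k by apply: val_inj => /=; lia.
rewrite -hhi //; apply: valid_pk_retype => //; first by rewrite k_hi'.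
exact: (valid_cmp P_laws) (vrs _) (zbwd_valid _).
Qed.

(** * Composition of zigzag maps *)

Section ZmapComp.
Variable P : PCat.
Hypothesis P_laws : pcat_laws P.
Variables X Y Z : zz P.
Variables (f : zmap X Y) (g : zmap Y Z).
Hypotheses (f_valid : zmap_valid f) (g_valid : zmap_valid g).
Let f_pre := prevalid_of_valid f_valid.
Let g_pre := prevalid_of_valid g_valid.

Lemma prevalid_zcomp : zmap_prevalid (zcomp g f).
Proof.
case: f_pre g_pre => f_mono zrf vrf vsf [g_mono zrg vrg vsg].
split=> /= [j j' /f_mono/g_mono //|i|i|j]; last 2 first.
- exact: (valid_cmp P_laws).
- exact: (valid_cmp P_laws).
by rewrite zrg zrf hat_comp.
Qed.

Definition comp_arrow (i : 'I_(zlen Z)) (c : 'I_(zlen Y).+1) : arr P :=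
  pcm (rsarrow g c i) (pk (zrs f c)).

Lemma comp_arrow_rlo l :
  comp_arrow (zs g l) (rlo l) = pk (cmp (zss g l) (cmp (zfwd l) (zrs f (rlo l)))).
Proof.
have [_ _ fwd _] := rsarrowP g_valid (in_span_zs_rlo g_pre l).
by rewrite /comp_arrow -(fwd l) // (pcm_pk_cmpl P_laws).
Qed.

Lemma comp_arrow_rhi l :
  comp_arrow (zs g l) (rhi l) = pk (cmp (zss g l) (cmp (zbwd l) (zrs f (rhi l)))).
Proof.
have [_ _ _ bwd] := rsarrowP g_valid (in_span_zs_rhi g_pre l).
by rewrite /comp_arrow -(bwd l) // (pcm_pk_cmpl P_laws).
Qed.

Lemma comp_arrow_step l : zr f (rlo l) = zr f (rhi l) ->
  comp_arrow (zs g l) (rlo l) = comp_arrow (zs g l) (rhi l).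
Proof.
move=> gap; rewrite comp_arrow_rlo comp_arrow_rhi -[LHS]pcm_pk -[RHS]pcm_pk.
by rewrite zmap_valid_gap.
Qed.

Lemma comp_arrow_const i (c1 c2 : 'I_(zlen Y).+1) :
  zr g (rlo i) <= c1 -> c1 <= c2 -> c2 <= zr g (rhi i) -> zr f c1 = zr f c2 ->
  comp_arrow i c1 = comp_arrow i c2.
Proof.
move=> lo_c1 le12; have [d c2E] : exists d, c2 = c1 + d :> nat by exists (c2 - c1); lia.
elim: d c2 c2E {le12} => [|d IH] c2 c2E c2_hi /(congr1 (@nat_of_ord _)) e.
  by congr comp_arrow; apply: val_inj => /=; lia.
have lt_d : c1 + d < zlen Y by move: (ltn_ord c2); lia.
pose l := Ordinal lt_d.
have l_i : zs g l = i by apply/(zs_fibreP g_pre) => /=; lia.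
have c2E' : c2 = rhi l by apply: val_inj; rewrite [RHS]rhiE /=; lia.
have mid_lo : zr f c1 <= zr f (rlo l) by apply: (zr_mono f_pre) => /=; lia.
have mid_hi : zr f (rlo l) <= zr f c2 by rewrite c2E'; exact: (zr_rlo_rhi f_pre).
have e1 : zr f c1 = zr f (rlo l) by apply: val_inj => /=; lia.
rewrite (IH (rlo l)) //; last by rewrite /=; lia.
rewrite -l_i c2E' comp_arrow_step //; apply: val_inj => /=.
by rewrite -c2E' -e; move/(congr1 (@nat_of_ord _)): e1.
Qed.

Lemma rsarrow_spec_zcomp_through i k (c : 'I_(zlen Y).+1) :
  zr g (rlo i) <= c <= zr g (rhi i) -> zr f c = k ->
  rsarrow_spec (zcomp g f) k i (comp_arrow i c).
Proof.
move=> /andP[lo_c c_hi] ck; have ckn := congr1 (@nat_of_ord _) ck; split=> /=.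
- move=> kE; rewrite -(comp_arrow_const (leqnn _) lo_c c_hi); last by rewrite ck kE.
  have [glo _ _ _] := rsarrowP g_valid (in_span_rlo g_pre i).
  by rewrite -(pcm_pk_cmpl P_laws) /comp_arrow -glo.
- move=> kE; rewrite (comp_arrow_const lo_c c_hi (leqnn _)); last by rewrite ck kE.
  have [_ ghi _ _] := rsarrowP g_valid (in_span_rhi g_pre i).
  by rewrite -(pcm_pk_cmpl P_laws) /comp_arrow -ghi.
- move=> j ji kj; subst i; set l := zs f j in lo_c c_hi *.
  have /(zs_fibreP f_pre) j_fib : zs f j = l by [].
  have /(zs_fibreP g_pre) l_fib : zs g l = zs g l by [].
  have c_lo : c <= rlo l.
    case: (leqP c l) => [//|lt_c]; have := zr_mono f_pre (lt_c : rhi l <= c); lia.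
  have e : zr f c = zr f (rlo l).
    by apply: val_inj => /=; have := zr_mono f_pre c_lo; lia.
  rewrite (comp_arrow_const lo_c c_lo _ e) /=; last by lia.
  rewrite comp_arrow_rlo -(pcm_pk_cmpr P_laws) (zmap_valid_least f_valid (erefl l)) ?pcm_pk //.
  by move/(congr1 (@nat_of_ord _)): e; lia.
- move=> j ji kj; subst i; set l := zs f j in lo_c c_hi *.
  have /(zs_fibreP f_pre) j_fib : zs f j = l by [].
  have /(zs_fibreP g_pre) l_fib : zs g l = zs g l by [].
  have c_hi' : rhi l <= c.
    rewrite rhiE; case: (leqP c l) => // le_c; have := zr_mono f_pre (le_c : c <= rlo l); lia.
  have e : zr f (rhi l) = zr f c.
    by apply: val_inj => /=; have := zr_mono f_pre c_hi'; lia.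
  rewrite -(comp_arrow_const _ c_hi' c_hi e); last by rewrite rhiE; lia.
  rewrite comp_arrow_rhi -(pcm_pk_cmpr P_laws) (zmap_valid_greatest f_valid (erefl l)) ?pcm_pk //.
  by move/(congr1 (@nat_of_ord _)): e; lia.
Qed.

Lemma rsarrow_spec_zcomp_inside i (k : 'I_(zlen X).+1) l :
  zs g l = i -> zr f (rlo l) < k < zr f (rhi l) ->
  rsarrow_spec (zcomp g f) k i (pcm (pk (zss g l)) (rsarrow f k l)).
Proof.
move=> <-{i} /andP[lo_k k_hi].
have /(zs_fibreP g_pre) l_fib : zs g l = zs g l by [].
have span : in_span f k l by rewrite /in_span; lia.
have [_ _ ffwd fbwd] := rsarrowP f_valid span.
split=> /=.
- move=> /(congr1 (@nat_of_ord _)) kE.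
  suff: zr f (zr g (rlo (zs g l))) <= zr f (rlo l) by lia.
  by apply: (zr_mono f_pre); rewrite rloE; lia.
- move=> /(congr1 (@nat_of_ord _)) kE.
  suff: zr f (rhi l) <= zr f (zr g (rhi (zs g l))) by lia.
  by apply: (zr_mono f_pre); rewrite rhiE; lia.
- move=> j jl kj; have j_l : zs f j = l by apply/(zs_fibreP f_pre); lia.
  by rewrite -(pcm_pk_cmpr P_laws) (ffwd j j_l kj) j_l.
- move=> j jl kj; have j_l : zs f j = l by apply/(zs_fibreP f_pre); lia.
  by rewrite -(pcm_pk_cmpr P_laws) (fbwd j j_l kj) j_l.
Qed.

(* A discrete intermediate value argument for [zr f] along the [g]-span of [i]. *)
Lemma zcomp_span_cases i k : in_span (zcomp g f) k i ->
  (exists2 c : 'I_(zlen Y).+1, zr g (rlo i) <= c <= zr g (rhi i) & zr f c = k) \/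
  (exists2 l, zs g l = i & zr f (rlo l) < k < zr f (rhi l)).
Proof.
rewrite /in_span /= => /andP[lo_k k_hi].
case: (classic (exists2 c : 'I_(zlen Y).+1,
  zr g (rlo i) <= c <= zr g (rhi i) & zr f c = k)) => [|no_c]; [by left|right].
have {}no_c (c : 'I_(zlen Y).+1) : zr g (rlo i) <= c <= zr g (rhi i) -> zr f c != k :> nat.
  by move=> c_in; apply/eqP => ck; apply: no_c; exists c => //; apply: val_inj.
have lohi := zr_rlo_rhi g_pre i.
pose F x := zr f (inord x : 'I_(zlen Y).+1) : nat.
have FE (c : 'I_(zlen Y).+1) : F c = zr f c by rewrite /F inord_val.
have F_lo : F (zr g (rlo i)) < k.
  by move: (no_c (zr g (rlo i))); rewrite FE leqnn lohi; lia.
have F_hi : k <= F (zr g (rhi i)) by rewrite FE.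
have lt_lohi : zr g (rlo i) < zr g (rhi i).
  case: (ltnP (zr g (rlo i)) (zr g (rhi i))) => [//|ge].
  have e : zr g (rlo i) = zr g (rhi i) by apply: val_inj => /=; lia.
  by move: F_lo F_hi; rewrite e; lia.
have [c /andP[lo_c c_hi] /andP[Fc_k k_Fc1]] := nat_crossing lt_lohi F_lo F_hi.
have c_lt : c < zlen Y by move: (leq_ord (zr g (rhi i))); lia.
pose l := Ordinal c_lt.
have FloE : F c = zr f (rlo l) by rewrite -FE.
have FhiE : F c.+1 = zr f (rhi l) by rewrite -FE.
exists l; first by apply/(zs_fibreP g_pre) => /=; lia.
by move: (no_c (rhi l)); rewrite -FloE -FhiE rhiE /=; lia.
Qed.

Lemma valid_zcomp : zmap_valid (zcomp g f).
Proof.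
apply: (valid_of_rsarrow_spec prevalid_zcomp) => i k /zcomp_span_cases.
case=> [[c c_in ck]|[l l_i k_in]]; eexists.
- exact: rsarrow_spec_zcomp_through c_in ck.
- exact: rsarrow_spec_zcomp_inside l_i k_in.
Qed.

Lemma rsarrow_zcomp i k (c : 'I_(zlen Y).+1) :
  zr g (rlo i) <= c <= zr g (rhi i) -> zr f c = k ->
  rsarrow (zcomp g f) k i = comp_arrow i c.
Proof.
move=> c_in ck; have span : in_span (zcomp g f) k i.
  by case/andP: c_in => ? ?; rewrite /in_span /= -ck !(zr_mono f_pre).
apply: (rsarrow_spec_unique prevalid_zcomp span (rsarrowP valid_zcomp span)).
exact: rsarrow_spec_zcomp_through.
Qed.

End ZmapComp.

Section ZcLaws.
Variable P : PCat.
Hypothesis P_laws : pcat_laws P.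

Lemma valid_zid (X : zz P) : zmap_valid (zid X).
Proof.
have id_pre : zmap_prevalid (zid X).
  by split=> //= [i|*|*]; [rewrite hat_id | apply: (valid_idm P_laws) ..].
apply: (valid_of_rsarrow_spec id_pre) => l k /andP[/= lo_k k_hi].
exists (if k == rlo l then pk (zfwd l) else pk (zbwd l)).
have lo_hi : rlo l != rhi l by apply/eqP => /(congr1 (@nat_of_ord _)); rewrite rhiE /=; lia.
split=> /=.
- by move=> ->; rewrite eqxx (cmpf1 P_laws).
- by move=> ->; rewrite eq_sym (negbTE lo_hi) (cmpf1 P_laws).
- move=> j <- kj; rewrite (cmp1f P_laws).
  have -> : k = rlo j by apply: val_inj; exact: kj.
  by rewrite eqxx.
- move=> j <- kj; rewrite (cmp1f P_laws).
  by case: eqP => // /(congr1 (@nat_of_ord _)) /=; lia.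
Qed.

Lemma zcompA (X Y Z W : zz P) (h : zmap Z W) (g : zmap Y Z) (f : zmap X Y) :
  zcomp h (zcomp g f) = zcomp (zcomp h g) f.
Proof. by apply: zmap_ext => //= i; rewrite (cmpA P_laws). Qed.

Lemma zcomp1f (X Y : zz P) (f : zmap X Y) : zcomp (zid Y) f = f.
Proof. by apply: zmap_ext => //= i; rewrite (cmp1f P_laws). Qed.

Lemma zcompf1 (X Y : zz P) (f : zmap X Y) : zcomp f (zid X) = f.
Proof. by apply: zmap_ext => //= i; rewrite (cmpf1 P_laws). Qed.

Lemma pcat_laws_Zc : pcat_laws (Zc P).
Proof.
split=> /= *; [exact: zcompA | exact: zcomp1f | exact: zcompf1 | | exact: valid_zid].
exact: valid_zcomp.
Qed.

End ZcLaws.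

Lemma pcat_laws_Zn (C : category) n : pcat_laws (Zn n (pcat_of C)).
Proof.
elim: n => [|n IHn] /=; last exact: pcat_laws_Zc.
by split=> //= *; [apply: ccompA | apply: ccomp1f | apply: ccompf1].
Qed.

(** * Inserting identity spans along an injective index map *)

Definition witness (T : Type) (Q : T -> Prop) (e : exists x, Q x) : T :=
  proj1_sig (constructive_indefinite_description Q e).

Lemma witnessP (T : Type) (Q : T -> Prop) (e : exists x, Q x) : Q (witness e).
Proof. exact: proj2_sig (constructive_indefinite_description Q e). Qed.

Section Spread.
Variable P : PCat.
Hypothesis P_laws : pcat_laws P.
Variable X : zz P.
Variable m : nat.
Variable psi : 'I_(zlen X) -> 'I_m.
Hypotheses (psi_mono : monotone psi) (psi_inj : injective psi).

Definition spread_reg (c : 'I_m.+1) : ob P := zreg (z:=X) (hat psi c).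

(* Outside the image of [psi] the singular object is the regular object on either
   side, reached by identities. *)
Definition spread_sing (l : 'I_m) : ob P :=
  if [pick j | psi j == l] is Some j then zsing (z:=X) j else zreg (z:=X) (hat psi (rlo l)).

Definition gap_id (l : 'I_m) : arr P := pk (@idm P (zreg (z:=X) (hat psi (rlo l)))).

Lemma spread_fwd_ex (l : 'I_m) : exists e : hom (spread_reg (rlo l)) (spread_sing l),
  [/\ valid e, forall j, psi j = l -> pk e = pk (zfwd j) &
      (forall j, psi j <> l) -> pk e = gap_id l].
Proof.
rewrite /spread_sing /spread_reg; case: pickP => [j /eqP jl|no_j].
  have e1 : zreg (z:=X) (rlo j) = zreg (z:=X) (hat psi (rlo l)) by rewrite -jl hat_rlo_inj.
  have [e [ve ee]] := valid_pk_retype e1 erefl (zfwd_valid j).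
  exists e; split=> // [j' j'l|gap]; last by case: (gap j).
  by have -> : j' = j by apply: psi_inj; rewrite jl j'l.
exists idm; split=> [|j jl|//]; first exact: (valid_idm P_laws).
by move: (no_j j); rewrite jl eqxx.
Qed.

Lemma spread_bwd_ex (l : 'I_m) : exists e : hom (spread_reg (rhi l)) (spread_sing l),
  [/\ valid e, forall j, psi j = l -> pk e = pk (zbwd j) &
      (forall j, psi j <> l) -> pk e = gap_id l].
Proof.
rewrite /spread_sing /spread_reg; case: pickP => [j /eqP jl|no_j].
  have e1 : zreg (z:=X) (rhi j) = zreg (z:=X) (hat psi (rhi l)) by rewrite -jl hat_rhi_inj.
  have [e [ve ee]] := valid_pk_retype e1 erefl (zbwd_valid j).
  exists e; split=> // [j' j'l|gap]; last by case: (gap j).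
  by have -> : j' = j by apply: psi_inj; rewrite jl j'l.
have gap j : psi j <> l by move=> jl; move: (no_j j); rewrite jl eqxx.
have e1 : zreg (z:=X) (hat psi (rlo l)) = zreg (z:=X) (hat psi (rhi l)) by rewrite hat_gap.
have [e [ve ee]] := valid_pk_retype e1 erefl (valid_idm P_laws (zreg (z:=X) (hat psi (rlo l)))).
by exists e; split=> // j /gap.
Qed.

Definition spread_fwd l := witness (spread_fwd_ex l).
Definition spread_bwd l := witness (spread_bwd_ex l).

Lemma spread_fwdP l : [/\ valid (spread_fwd l),
  forall j, psi j = l -> pk (spread_fwd l) = pk (zfwd j) &
  (forall j, psi j <> l) -> pk (spread_fwd l) = gap_id l].
Proof. exact: witnessP (spread_fwd_ex l). Qed.

Lemma spread_bwdP l : [/\ valid (spread_bwd l),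
  forall j, psi j = l -> pk (spread_bwd l) = pk (zbwd j) &
  (forall j, psi j <> l) -> pk (spread_bwd l) = gap_id l].
Proof. exact: witnessP (spread_bwd_ex l). Qed.

Definition spread : zz P :=
  @ZZ P m spread_reg spread_sing spread_fwd spread_bwd
    (fun l => let: And3 v _ _ := spread_fwdP l in v)
    (fun l => let: And3 v _ _ := spread_bwdP l in v).

Lemma spread_sing_id_ex (j : 'I_(zlen X)) :
  exists t : hom (zsing (z:=X) j) (spread_sing (psi j)),
    valid t /\ pk t = pk (@idm P (zsing (z:=X) j)).
Proof.
apply: valid_pk_retype (valid_idm P_laws _) => //.
by rewrite /spread_sing; case: pickP => [j' /eqP/psi_inj -> //|/(_ j)]; rewrite eqxx.
Qed.

Definition spread_sing_id j := witness (spread_sing_id_ex j).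

Lemma spread_sing_idP j :
  valid (spread_sing_id j) /\ pk (spread_sing_id j) = pk (@idm P (zsing (z:=X) j)).
Proof. exact: witnessP (spread_sing_id_ex j). Qed.

Definition spread_in : zmap X spread :=
  @ZMap P X spread psi (hat psi) (fun c => @idm P (spread_reg c)) spread_sing_id.

Lemma valid_spread_in : zmap_valid spread_in.
Proof.
split=> //= [c|j|l]; [exact: (valid_idm P_laws) | by case: (spread_sing_idP j) |].
have [_ fwd_in fwd_gap] := spread_fwdP l; have [_ bwd_in bwd_gap] := spread_bwdP l.
rewrite !(cmpf1 P_laws); split; [|split; [|split]].
- move=> p pl _; rewrite (pk_cmp1f P_laws _ (proj2 (spread_sing_idP p))).
  by rewrite (fwd_in p pl).
- move=> q ql _; rewrite (pk_cmp1f P_laws _ (proj2 (spread_sing_idP q))).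
  by rewrite (bwd_in q ql).
- move=> p q pl _ ql _ j j' j'E pj j'q.
  have pq : p = q by apply: psi_inj; rewrite pl ql.
  by move: j'q pj; rewrite -pq j'E; lia.
- by move=> gap; rewrite fwd_gap // bwd_gap.
Qed.

Section SpreadLift.
Variable Y : zz P.
Variable h : zmap X Y.
Variable u : 'I_m -> 'I_(zlen Y).
Hypotheses (h_valid : zmap_valid h) (u_mono : monotone u) (hu : forall j, u (psi j) = zs h j).
Let h_pre := prevalid_of_valid h_valid.

Lemma hat_psi_u i : hat psi (hat u i) = zr h i.
Proof. by case: h_pre => _ zrE _ _; rewrite zrE hat_comp //; apply: eq_hat. Qed.

Lemma in_span_gap l : in_span h (hat psi (rlo l)) (u l).
Proof.
rewrite /in_span -!hat_psi_u !(hat_mono psi_mono) //.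
  by rewrite ltnW // rloE (ltn_hat u_mono) rhiE.
by rewrite leqNgt rloE (ltn_hat u_mono) ltnn.
Qed.

Lemma spread_lift_reg_ex i : exists t : hom (spread_reg (hat u i)) (zreg i),
  valid t /\ pk t = pk (zrs h i).
Proof.
apply: valid_pk_retype => //; first by rewrite /spread_reg hat_psi_u.
by case: h_pre.
Qed.

Lemma spread_lift_sing_ex l : exists t : hom (spread_sing l) (zsing (u l)),
  [/\ valid t, forall j, psi j = l -> pk t = pk (zss h j) &
      (forall j, psi j <> l) -> pk t = rsarrow h (hat psi (rlo l)) (u l)].
Proof.
rewrite /spread_sing; case: pickP => [j /eqP jl|no_j].
  have e1 : zsing (zs h j) = zsing (u l) by rewrite -jl hu.
  have [t [vt et]] := valid_pk_retype erefl e1 (let: And4 _ _ _ v := h_pre in v j).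
  exists t; split=> // [j' j'l|gap]; last by case: (gap j).
  by have -> : j' = j by apply: psi_inj; rewrite jl j'l.
have [t [vt et]] := rsarrow_typed P_laws h_valid (in_span_gap l).
by exists t; split=> // j jl; move: (no_j j); rewrite jl eqxx.
Qed.

Definition spread_lift_reg i := witness (spread_lift_reg_ex i).
Definition spread_lift_sing l := witness (spread_lift_sing_ex l).

Lemma spread_lift_regP i : valid (spread_lift_reg i) /\ pk (spread_lift_reg i) = pk (zrs h i).
Proof. exact: witnessP (spread_lift_reg_ex i). Qed.

Lemma spread_lift_singP l : [/\ valid (spread_lift_sing l),
  forall j, psi j = l -> pk (spread_lift_sing l) = pk (zss h j) &
  (forall j, psi j <> l) -> pk (spread_lift_sing l) = rsarrow h (hat psi (rlo l)) (u l)].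
Proof. exact: witnessP (spread_lift_sing_ex l). Qed.

Definition spread_lift : zmap spread Y :=
  @ZMap P spread Y u (hat u) spread_lift_reg spread_lift_sing.

Lemma spread_lift_sing_fwd l :
  pk (cmp (spread_lift_sing l) (spread_fwd l)) = rsarrow h (hat psi (rlo l)) (u l).
Proof.
have [_ sing_in sing_gap] := spread_lift_singP l; have [_ fwd_in fwd_gap] := spread_fwdP l.
case: (classic (exists j, psi j = l)) => [[j jl]|no_j]; last first.
  have gap j : psi j <> l by move=> jl; apply: no_j; exists j.
  by rewrite (pk_cmpf1 P_laws _ (fwd_gap gap)) (sing_gap gap).
rewrite -pcm_pk (sing_in j jl) (fwd_in j jl) pcm_pk -jl hat_rlo_inj // hu.
by have [_ _ fwd _] := rsarrowP h_valid (in_span_zs_rlo h_pre j); apply: fwd.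
Qed.

Lemma spread_lift_sing_bwd l :
  pk (cmp (spread_lift_sing l) (spread_bwd l)) = rsarrow h (hat psi (rhi l)) (u l).
Proof.
have [_ sing_in sing_gap] := spread_lift_singP l; have [_ bwd_in bwd_gap] := spread_bwdP l.
case: (classic (exists j, psi j = l)) => [[j jl]|no_j]; last first.
  have gap j : psi j <> l by move=> jl; apply: no_j; exists j.
  by rewrite (pk_cmpf1 P_laws _ (bwd_gap gap)) (sing_gap gap) (hat_gap psi_mono gap).
rewrite -pcm_pk (sing_in j jl) (bwd_in j jl) pcm_pk -jl hat_rhi_inj // hu.
by have [_ _ _ bwd] := rsarrowP h_valid (in_span_zs_rhi h_pre j); apply: bwd; rewrite ?rhiE.
Qed.

Lemma valid_spread_lift : zmap_valid spread_lift.
Proof.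
have lift_pre : zmap_prevalid spread_lift.
  by split=> //= [i|l]; [case: (spread_lift_regP i) | case: (spread_lift_singP l)].
apply: (valid_of_rsarrow_spec lift_pre) => i k _.
exists (rsarrow h (hat psi k) i); split=> /=.
- move=> ->; rewrite -pcm_pk (spread_lift_regP _).2 pcm_pk hat_psi_u.
  by have [lo _ _ _] := rsarrowP h_valid (in_span_rlo h_pre i); apply: lo.
- move=> ->; rewrite -pcm_pk (spread_lift_regP _).2 pcm_pk hat_psi_u.
  by have [_ hi _ _] := rsarrowP h_valid (in_span_rhi h_pre i); apply: hi.
- move=> l <- kl; have -> : k = rlo l by apply: val_inj.
  exact: spread_lift_sing_fwd.
- move=> l <- kl; have -> : k = rhi l by apply: val_inj; rewrite [RHS]rhiE; exact: kl.
  exact: spread_lift_sing_bwd.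
Qed.

Lemma spread_lift_in : zcomp spread_lift spread_in = h.
Proof.
apply: zmap_ext => /= [j|i|i|j]; [exact: hu | exact: hat_psi_u | |].
  by rewrite (cmpf1 P_laws) (spread_lift_regP i).2.
have [_ sing_in _] := spread_lift_singP (psi j).
by rewrite (pk_cmpf1 P_laws _ (spread_sing_idP j).2) (sing_in j).
Qed.

Lemma spread_lift_unique (v : zmap spread Y) :
  zmap_valid v -> zcomp v spread_in = h -> zs v =1 u -> v = spread_lift.
Proof.
move=> v_valid vh vu; have v_pre := prevalid_of_valid v_valid.
apply: zmap_ext => // [i|i|l].
- by case: v_pre => _ -> _ _; apply: eq_hat.
- by rewrite (spread_lift_regP i).2 -vh /= (cmpf1 P_laws).
case: (classic (exists j, psi j = l)) => [[j <-]|no_j].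
  have [_ sing_in _] := spread_lift_singP (psi j).
  by rewrite (sing_in j) // -vh /= (pk_cmpf1 P_laws _ (spread_sing_idP j).2).
have gap j : psi j <> l by move=> jl; apply: no_j; exists j.
have [_ _ sing_gap] := spread_lift_singP l; have [_ _ fwd_gap] := spread_fwdP l.
have /(zs_fibreP v_pre) l_fib := erefl (zs v l).
have c_in : zr v (rlo (zs v l)) <= rlo l <= zr v (rhi (zs v l)) by rewrite rloE; lia.
rewrite sing_gap // -(pk_cmpf1 P_laws (zss v l) (fwd_gap gap)) -vh -vu.
rewrite (rsarrow_zcomp P_laws valid_spread_in v_valid c_in erefl) /comp_arrow /=.
have [_ _ fwd _] := rsarrowP v_valid (c_in : in_span v (rlo l) (zs v l)).
by rewrite -(fwd l) // pcm_pk (cmpf1 P_laws).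
Qed.

End SpreadLift.

Lemma spread_in_cocartesian : pi_cocartesian spread_in.
Proof.
move=> Y h u h_valid u_mono hu; exists (spread_lift h_valid u_mono hu).
split; first by split; [exact: valid_spread_lift | split; [exact: spread_lift_in | by []]].
by move=> v [v_valid [vh vu]]; apply: spread_lift_unique.
Qed.

Lemma spread_in_mono : delta_mono (zs spread_in).
Proof. by move=> k a b _ _ e x; apply: psi_inj. Qed.

End Spread.

(** * Isomorphisms and the vertical factor *)

Lemma is_iso_pk (P : PCat) (a b a' b' : ob P) (f : hom a b) (g : hom b' a') :
  b' = b -> a' = a -> valid f -> valid g ->
  pcm (pk g) (pk f) = pk (@idm P a) -> pcm (pk f) (pk g) = pk (@idm P b) -> is_iso f.
Proof.
move=> eb ea; subst; rewrite !pcm_pk => vf vg gf fg.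
by split=> //; exists g; split=> //; split; apply: pk_inj.
Qed.

Lemma is_iso_Zc (P : PCat) (X Y : zz P) (f : zmap X Y) : @is_iso (Zc P) X Y f ->
  [/\ pi_vertical f, forall i, is_iso (zrs f i) & forall j, is_iso (zss f j)].
Proof.
case=> f_valid [g [g_valid [/= gf fg]]].
have gfs j : zs g (zs f j) = j by exact: (congr1 (fun h => zs h j) gf).
have fgs i : zs f (zs g i) = i by exact: (congr1 (fun h => zs h i) fg).
have fgr c : zr g (zr f c) = c by exact: (congr1 (fun h => zr h c) fg).
have f_inj : injective (zs f) by apply: (can_inj gfs).
have g_inj : injective (zs g) by apply: (can_inj fgs).
case: (f_valid) (g_valid) => f_mono _ vfr vfs _ [g_mono _ vgr vgs _].
split.
- have len_le (n m : nat) (psi : 'I_n -> 'I_m) : injective psi -> n <= m.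
    by move=> /leq_card; rewrite !card_ord.
  split=> [|j]; first by apply/eqP; rewrite eqn_leq (len_le _ _ _ f_inj) (len_le _ _ _ g_inj).
  have := inj_monotone_ge f_mono f_inj j; have := inj_monotone_ge g_mono g_inj (zs f j).
  by rewrite gfs; lia.
- move=> i; apply: (is_iso_pk (congr1 (@zreg _ Y) (fgr i)) erefl (vfr i) (vgr _)).
    have -> : pk (zrs f i) = pk (zrs f (zr g (zr f i))) by rewrite fgr.
    by rewrite pcm_pk; exact: (congr1 (fun h => pk (zrs h (zr f i))) gf).
  by rewrite pcm_pk; exact: (congr1 (fun h => pk (zrs h i)) fg).
- move=> j; apply: (is_iso_pk erefl (congr1 (@zsing _ X) (gfs j)) (vfs j) (vgs _)).
    by rewrite pcm_pk; exact: (congr1 (fun h => pk (zss h j)) gf).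
  have -> : pk (zss f j) = pk (zss f (zs g (zs f j))) by rewrite gfs.
  by rewrite pcm_pk; exact: (congr1 (fun h => pk (zss h (zs f j))) fg).
Qed.

Section VerticalFactor.
Variable P : PCat.
Hypothesis P_laws : pcat_laws P.
Variables (X Y : zz P) (f : zmap X Y).
Hypotheses (f_valid : zmap_valid f) (f_inj : injective (zs f)).
Let f_mono : monotone (zs f) := valid_monotone f_valid.
Let f_pre := prevalid_of_valid f_valid.

Definition vfactor : zmap (spread P_laws f_mono f_inj) Y :=
  spread_lift P_laws f_mono f_inj f_valid (@monotone_id _) (fun=> erefl).

Lemma vfactorE : zcomp vfactor (spread_in P_laws f_mono f_inj) = f.
Proof. exact: spread_lift_in. Qed.

Lemma valid_vfactor : zmap_valid vfactor.
Proof. exact: valid_spread_lift. Qed.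

Lemma vfactor_reg i : pk (zrs vfactor i) = pk (zrs f i).
Proof. exact: (spread_lift_regP f_mono f_valid (@monotone_id _) (fun=> erefl) i).2. Qed.

Lemma vfactor_sing_in j : pk (zss vfactor (zs f j)) = pk (zss f j).
Proof.
have [_ sing_in _] :=
  spread_lift_singP P_laws f_mono f_inj f_valid (@monotone_id _) (fun=> erefl) (zs f j).
exact: sing_in.
Qed.

Lemma vfactor_sing_gap l : (forall j, zs f j <> l) ->
  pk (zss vfactor l) = pk (cmp (zfwd l) (zrs f (rlo l))).
Proof.
move=> gap; have [_ _ ->] //:=
  spread_lift_singP P_laws f_mono f_inj f_valid (@monotone_id _) (fun=> erefl) l.
have [lo _ _ _] := rsarrowP f_valid (in_span_rlo f_pre l).
by case: (f_valid) => _ zrE _ _ _; rewrite -zrE lo.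
Qed.

(* The inverse is the map [Y -> spread] given by the cocartesian property of [f];
   both round trips are identities by the uniqueness of such factorizations. *)
Lemma is_iso_vfactor : pi_cocartesian f -> @is_iso (Zc P) _ _ vfactor.
Proof.
move=> f_cocart; pose s := spread_in P_laws f_mono f_inj.
have s_valid : zmap_valid s by apply: valid_spread_in.
have [w [[w_valid [wf ws]] _]] := f_cocart _ s _ s_valid (@monotone_id _) (fun=> erefl).
split; first exact: valid_vfactor.
exists w; split=> //; split.
- have s_unique := spread_lift_unique (P_laws := P_laws) (psi_mono := f_mono)
    (psi_inj := f_inj) s_valid (@monotone_id _) (fun=> erefl).
  apply: (etrans (s_unique _ _ _ _)); last apply/esym/s_unique.
  + exact: valid_zcomp valid_vfactor w_valid.
  + by rewrite -zcompA // vfactorE.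
  + by move=> l /=; rewrite ws.
  + exact: valid_zid.
  + exact: zcomp1f.
  + by [].
- have [v [_ f_unique]] := f_cocart _ f _ f_valid (@monotone_id _) (fun=> erefl).
  apply: (etrans (y := v)); [apply: f_unique | apply/esym/f_unique].
    split; first exact: valid_zcomp w_valid valid_vfactor.
    by split=> [|j /=]; [rewrite -zcompA // wf vfactorE | rewrite ws].
  by split; [apply: valid_zid | split; [apply: zcomp1f |]].
Qed.

End VerticalFactor.

(** * Degeneracy maps *)

Definition degen_gen (C : category) n (X Y : zz (Zn n (pcat_of C))) (f : zmap X Y) : Prop :=
  (zmap_valid f /\ pi_cocartesian f /\ delta_mono (zs f)) \/
  (zmap_valid f /\ pi_vertical f /\
   (forall i, degen (zrs f i)) /\ (forall j, degen (zss f j))).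

Lemma degen_succE (C : category) n (X Y : zz (Zn n (pcat_of C))) (f : zmap X Y) :
  @degen (pcat_of C) n.+1 X Y f = @comp_closure (Zc (Zn n (pcat_of C))) (@degen_gen C n) X Y f.
Proof. by []. Qed.

Record degen_laws (C : category) (n : nat) : Prop := DegenLaws {
  iso_degen : forall (a b : ob (Zn n (pcat_of C))) (f : hom a b), is_iso f -> degen f;
  degen_valid : forall (a b : ob (Zn n (pcat_of C))) (f : hom a b), degen f -> valid f;
  degen_cmp : forall (a b c : ob (Zn n (pcat_of C))) (g : hom b c) (f : hom a b),
    degen f -> degen g -> degen (cmp g f);
  degen_cancel : forall (a b c : ob (Zn n (pcat_of C)))
      (f : hom a c) (g : hom b c) (phi : hom a b),
    valid f -> valid g -> valid phi -> cmp g phi = f -> degen f -> degen g -> degen phi }.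

Lemma degen_laws0 (C : category) : degen_laws C 0.
Proof.
split=> /= [//|a b f [] //| a b c g f | a b c f g phi _ _ _ <-].
- move=> [_ [f' [_ [f'f ff']]]] [_ [g' [_ [g'g gg']]]]; split=> //.
  exists (ccomp f' g'); split=> //; split; rewrite /= in f'f ff' g'g gg' *.
  + by rewrite -ccompA (ccompA g') g'g ccomp1f.
  + by rewrite -ccompA (ccompA f) ff' ccomp1f.
- move=> [_ [f' [_ [f'f ff']]]] [_ [g' [_ [g'g gg']]]]; split=> //.
  exists (ccomp f' g); split=> //; split; rewrite /= in f'f ff' g'g gg' *.
    by rewrite -ccompA.
  (* phi (f' g) = g' (g phi) f' g = g' g = 1 *)
  rewrite -[ccomp phi _]ccomp1f -g'g -!ccompA (ccompA phi f') (ccompA g).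
  by rewrite (ccompA g phi f') ff' ccomp1f g'g.
Qed.

Section DegenStep.
Variables (C : category) (n : nat).
Hypothesis IH : degen_laws C n.
Notation P := (Zn n (pcat_of C)).
Let P_laws : pcat_laws P := pcat_laws_Zn C n.

Lemma degen_pk (a b a' b' : ob P) (f : hom a b) (g : hom a' b') :
  pk f = pk g -> degen f -> degen g.
Proof. exact: (@pk_transport P (fun a b f => @degen (pcat_of C) n a b f)). Qed.

Lemma degen_cancel_valid (a b c : ob P) (u : hom b c) (v : hom a b) :
  valid u -> valid v -> degen (cmp u v) -> degen u -> degen v.
Proof. by move=> vu vv; apply: (degen_cancel IH (valid_cmp P_laws vv vu) vu vv). Qed.

Definition slicewise_degen (X Y : zz P) (f : zmap X Y) : Prop :=
  [/\ injective (zs f), (forall i, degen (zrs f i)), (forall j, degen (zss f j)) &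
      forall l, (forall j, zs f j <> l) -> degen (cmp (zfwd l) (zrs f (rlo l)))].

Lemma degen_of_slicewise (X Y : zz P) (f : zmap X Y) :
  zmap_valid f -> slicewise_degen f -> degen (n := n.+1) f.
Proof.
move=> f_valid [f_inj deg_reg deg_sing deg_gap].
rewrite degen_succE -(vfactorE P_laws f_valid f_inj).
apply: (@cc_comp (Zc P)); apply: cc_base; [left|right].
  by split; [|split];
    [apply: valid_spread_in | apply: spread_in_cocartesian | apply: spread_in_mono].
split; first exact: valid_vfactor.
split; first by split.
split=> [i|l]; first by apply: degen_pk (deg_reg i); rewrite vfactor_reg.
case: (classic (exists j, zs f j = l)) => [[j <-]|no_j].
  by apply: degen_pk (deg_sing j); rewrite vfactor_sing_in.
have gap j : zs f j <> l by move=> jl; apply: no_j; exists j.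
by apply: degen_pk (deg_gap l gap); rewrite vfactor_sing_gap.
Qed.

Lemma slicewise_simple (X Y : zz P) (f : zmap X Y) :
  zmap_valid f -> pi_cocartesian f -> delta_mono (zs f) -> slicewise_degen f.
Proof.
move=> f_valid f_cocart /delta_mono_inj f_inj.
have [_ reg_iso sing_iso] := is_iso_Zc (is_iso_vfactor P_laws f_valid f_inj f_cocart).
split=> // [i|j|l gap].
- by apply: degen_pk (iso_degen IH (reg_iso i)); apply: vfactor_reg.
- by apply: degen_pk (iso_degen IH (sing_iso (zs f j))); apply: vfactor_sing_in.
- by apply: degen_pk (iso_degen IH (sing_iso l)); apply: vfactor_sing_gap.
Qed.

Lemma slicewise_parallel (X Y : zz P) (f : zmap X Y) :
  pi_vertical f -> (forall i, degen (zrs f i)) -> (forall j, degen (zss f j)) ->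
  slicewise_degen f.
Proof.
case=> len_eq zsE deg_reg deg_sing; split=> // [j j' e|l gap].
  by move: (zsE j); rewrite e zsE => /val_inj ->.
have lt_len : l < zlen X by rewrite len_eq.
by case: (gap (Ordinal lt_len)); apply: val_inj => /=; rewrite zsE.
Qed.

Lemma slicewise_comp (X Y Z : zz P) (f : zmap X Y) (g : zmap Y Z) :
  zmap_valid g -> slicewise_degen f -> slicewise_degen g -> slicewise_degen (zcomp g f).
Proof.
move=> g_valid [f_inj f_reg f_sing f_gap] [g_inj g_reg g_sing g_gap].
split=> /= [j j' /g_inj/f_inj //|i|j|i gap]; try exact: (degen_cmp IH).
case: (classic (exists l, zs g l = i)) => [[l li]|no_l]; last first.
  have ggap l : zs g l <> i by move=> li; apply: no_l; exists l.
  apply: degen_pk (degen_cmp IH (f_reg (zr g (rlo i))) (g_gap i ggap)).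
  by rewrite (cmpA P_laws).
(* [i] has the single preimage [l] under [g], which is then a gap of [f] with the same
   left regular end. *)
have fgap j : zs f j <> l by move=> jl; apply: (gap j); rewrite jl.
have l_least j : zs g j = i -> l <= j by move=> ji; rewrite (g_inj j l) ?ji.
have lo : zr g (rlo i) = rlo l.
  by apply: val_inj => /=; rewrite (zr_rlo_least (prevalid_of_valid g_valid) li l_least).
apply: degen_pk (degen_cmp IH (f_gap l fgap) (g_sing l)).
rewrite -!(pcm_pk_cmpl P_laws) (zmap_valid_least g_valid li); last by rewrite lo.
by congr pcm; rewrite lo.
Qed.

Lemma slicewise_cancel (A B T : zz P) (g : zmap B T) (phi : zmap A B) :
  zmap_valid g -> zmap_valid phi ->
  slicewise_degen (zcomp g phi) -> slicewise_degen g -> slicewise_degen phi.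
Proof.
move=> g_valid phi_valid [gphi_inj gphi_reg gphi_sing gphi_gap] [g_inj g_reg g_sing _].
case: (g_valid) => g_mono zrgE vgr vgs _; case: (phi_valid) => _ _ vpr vps _.
split=> [j j' e|c|j|l gap].
- by apply: gphi_inj; rewrite /= e.
- have [i <-] := hat_surj g_mono g_inj c; rewrite -zrgE.
  exact: degen_cancel_valid (vgr i) (vpr _) (gphi_reg i) (g_reg i).
- exact: degen_cancel_valid (vgs _) (vps j) (gphi_sing j) (g_sing _).
have gphi_gap' j : zs g (zs phi j) <> zs g l by move=> /g_inj /gap.
have l_least j : zs g j = zs g l -> l <= j by move=> /g_inj ->.
have lo : zr g (rlo (zs g l)) = rlo l.
  by apply: val_inj => /=; rewrite (zr_rlo_least (prevalid_of_valid g_valid) erefl l_least).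
have v_gap : valid (cmp (zfwd l) (zrs phi (rlo l))).
  exact: (valid_cmp P_laws) (vpr _) (zfwd_valid l).
apply: degen_cancel_valid (vgs l) v_gap _ (g_sing l).
apply: degen_pk (gphi_gap (zs g l) gphi_gap').
rewrite /= -!(pcm_pk_cmpl P_laws) -(zmap_valid_least g_valid (erefl (zs g l))); last by rewrite lo.
by congr pcm; rewrite lo.
Qed.

Lemma degen_succ_valid (X Y : zz P) (f : zmap X Y) : degen (n := n.+1) f -> zmap_valid f.
Proof.
rewrite degen_succE; elim=> {X Y f} [X Y f [[]|[]] //|X Y Z f g _ f_valid _ g_valid].
exact: valid_zcomp.
Qed.

Lemma slicewise_of_degen (X Y : zz P) (f : zmap X Y) :
  degen (n := n.+1) f -> slicewise_degen f.
Proof.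
rewrite degen_succE; elim=> {X Y f} [X Y f [[f_valid [f_cocart f_mono]]|f_par]|].
- exact: slicewise_simple.
- by case: f_par => _ [f_vert [f_reg f_sing]]; apply: slicewise_parallel.
- move=> X Y Z f g _ f_deg g_gen g_deg.
  apply: slicewise_comp f_deg g_deg.
  by apply: degen_succ_valid; rewrite degen_succE.
Qed.

Lemma degen_laws_succ : degen_laws C n.+1.
Proof.
split.
- move=> X Y f f_iso; have [f_vert reg_iso sing_iso] := is_iso_Zc f_iso.
  rewrite degen_succE; apply: cc_base; right; split; first by case: f_iso.
  by split=> //; split=> [i|j]; apply: (iso_degen IH).
- exact: degen_succ_valid.
- by move=> X Y Z g f; rewrite !degen_succE; apply: (@cc_comp (Zc P)).
- move=> A B T f g phi _ g_valid phi_valid gphi f_deg g_deg.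
  apply: (degen_of_slicewise phi_valid).
  apply: (slicewise_cancel g_valid phi_valid _ (slicewise_of_degen g_deg)).
  by apply: slicewise_of_degen; move: f_deg; rewrite -gphi.
Qed.

End DegenStep.

Lemma degen_lawsP (C : category) n : degen_laws C n.
Proof. by elim: n => [|n IHn]; [apply: degen_laws0 | apply: degen_laws_succ]. Qed.

Unset Implicit Arguments.

Theorem lemma3p8 (C : category) (n : nat)
  (A B T : ob (Zn n (pcat_of C)))
  (f : hom A T) (g : hom B T) (phi : hom A B) :
  valid f -> valid g -> valid phi ->
  cmp g phi = f ->
  degen f -> degen g -> degen phi.
Proof. exact: (@degen_cancel C n (degen_lawsP C n) A B T f g phi). Qed.
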